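(* Let $T$ be a complete dependent (NIP) first-order theory with monster model $\mathfrak{C}$. For $\ell<2$ let $\mathcal{D}_\ell$ be a proper filter on a set $I_\ell$, $m(\ell)<\omega$, and $\bar a_{\ell,t}\in {}^{m(\ell)}\mathfrak{C}$ for $t \in I_\ell$. Let $C\subseteq\mathfrak{C}$ and $\Delta$ be a set of formulas, both finite. Then there are $\mathcal{S}_0 \in \mathcal{D}_0^+$, $\mathcal{S}_1\in\mathcal{D}^+_1$ and a type $q$ such that $(\forall^{\mathcal{D}_0} s_0\in\mathcal{S}_0)(\forall^{\mathcal{D}_1} s_1\in \mathcal{S}_1)\,[q = \mathrm{tp}_\Delta(\bar a_{0,s_0}{}^\frown\bar a_{1,s_1}, C)]$.
   Context: For a filter $\mathcal{D}$ on $I$, $\mathcal{D}^+$ is the set of subsets of $I$ meeting every member of $\mathcal{D}$; for $\mathcal{S}\in\mathcal{D}^+$, ''$(\forall^{\mathcal{D}} s\in\mathcal{S})\,\phi(s)$'' means $\{s\in\mathcal{S}:\phi(s)\}$ belongs to the filter generated by $\mathcal{D}\cup\{\mathcal{S}\}$. $\mathrm{tp}_\Delta(\bar a, C)$ is the set of formulas $\varphi(\bar x,\bar c)^{\mathbf t}$ with $\varphi\in\Delta$, $\bar c$ from $C$, $\mathbf t$ a truth value, satisfied by $\bar a$. *)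

From Stdlib Require Import List Arith.
From Stdlib Require Vectors.Fin.
Import ListNotations.
Set Implicit Arguments.

Record signature := {
  Fn : Type;            (* function symbols (constants = arity 0) *)
  fn_ar : Fn -> nat;
  Rl : Type;
  rl_ar : Rl -> nat }.

Inductive term (L : signature) : Type :=
  | var : nat -> term L
  | app : forall f : Fn L, (Fin.t (fn_ar L f) -> term L) -> term L.

Inductive formula (L : signature) : Type :=
  | Feq : term L -> term L -> formula L
  | Frel : forall r : Rl L, (Fin.t (rl_ar L r) -> term L) -> formula L
  | Fneg : formula L -> formula L
  | Fand : formula L -> formula L -> formula L
  | Fex : nat -> formula L -> formula L.

Record structure (L : signature) := {
  dom :> Type;
  ifn : forall f : Fn L, (Fin.t (fn_ar L f) -> dom) -> dom;
  irl : forall r : Rl L, (Fin.t (rl_ar L r) -> dom) -> Prop }.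

Section Sem.
Variables (L : signature) (M : structure L).

Fixpoint eval (e : nat -> M) (t : term L) : M :=
  match t with
  | var _ x => e x
  | app f args => ifn M f (fun i => eval e (args i))
  end.

Definition upd (e : nat -> M) (x : nat) (a : M) : nat -> M :=
  fun y => if Nat.eqb y x then a else e y.

Fixpoint sat (e : nat -> M) (phi : formula L) : Prop :=
  match phi with
  | Feq t u => eval e t = eval e u
  | Frel r args => irl M r (fun i => eval e (args i))
  | Fneg p => ~ sat e p
  | Fand p q => sat e p /\ sat e q
  | Fex x p => exists a : M, sat (upd e x a) p
  end.

(** [ov l e]: the assignment sending variable i to l_i for i < length l,
    and to e i otherwise (substituting a tuple into the first variables). *)
Definition ov (l : list M) (e : nat -> M) : nat -> M := fun i => nth i l (e i).

Fixpoint occurs (x : nat) (t : term L) : Prop :=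
  match t with
  | var _ y => x = y
  | app f args => exists i, occurs x (args i)
  end.

Fixpoint free (x : nat) (phi : formula L) : Prop :=
  match phi with
  | Feq t u => occurs x t \/ occurs x u
  | Frel r args => exists i, occurs x (args i)
  | Fneg p => free x p
  | Fand p q => free x p \/ free x q
  | Fex y p => x <> y /\ free x p
  end.

(** Dependence (NIP): no partitioned formula phi(xbar; ybar) (|xbar| = m at
    variables 0..m-1, |ybar| = k at variables m..m+k-1, remaining free
    variables as parameters given by e) has the independence property, i.e.
    for each such phi there is n such that no n tuples are shattered. *)
Definition NIP : Prop :=
  forall (phi : formula L) (m k : nat) (e : nat -> M),
  exists n : nat,
    ~ (exists a : nat -> list M,
         (forall i, length (a i) = m) /\
         forall J : nat -> bool,
         exists b : list M, length b = k /\
           forall i, i < n -> (sat (ov (a i ++ b) e) phi <-> J i = true)).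

(** tp_Delta(abar, C): a set of triples ((phi,k), cbar, t), read as the
    formula phi(xbar, cbar)^t, where (phi,k) in Delta means phi = phi(xbar, ybar)
    with |ybar| = k, cbar a k-tuple from C, t a truth value, and abar satisfies
    phi(xbar,cbar)^t. *)
Definition tp (Delta : list (formula L * nat)) (C : list M) (abar : list M)
    (p : (formula L * nat) * list M * bool) : Prop :=
  match p with
  | (phik, c, t) =>
      In phik Delta /\ length c = snd phik /\ (forall c0, In c0 c -> In c0 C) /\
      forall e : nat -> M, (sat (ov (abar ++ c) e) (fst phik) <-> t = true)
  end.

End Sem.

Section Filters.
Variable I : Type.

Definition proper_filter (D : (I -> Prop) -> Prop) : Prop :=
  D (fun _ => True) /\
  (forall X Y, D X -> (forall i, X i -> Y i) -> D Y) /\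
  (forall X Y, D X -> D Y -> D (fun i => X i /\ Y i)) /\
  ~ D (fun _ => False).

Definition positive (D : (I -> Prop) -> Prop) (S : I -> Prop) : Prop :=
  forall X, D X -> exists i, X i /\ S i.

Definition gen_filter (F : (I -> Prop) -> Prop) (Y : I -> Prop) : Prop :=
  exists Ls : list (I -> Prop),
    (forall X, In X Ls -> F X) /\ forall i, (forall X, In X Ls -> X i) -> Y i.

(** (forall^D s in S) P s  :=  {s in S | P s} belongs to the filter generated by D u {S} *)
Definition forall_filter (D : (I -> Prop) -> Prop) (S : I -> Prop) (P : I -> Prop) : Prop :=
  gen_filter (fun X => D X \/ (forall i, X i <-> S i)) (fun s => S s /\ P s).

End Filters.

From Stdlib Require Import List Arith Lia Classical FunctionalExtensionality.
Import ListNotations.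

(** Each formula instance phi(x, c)^t with c from C defines a relation
    R(s0, s1) := "a0_s0 ^ a1_s1 satisfies phi(x, c)^t" between I0 and I1, and
    NIP says that R shatters no sequence of some length n ([nip_rel]).  The key
    lemma [nip_rel_decided] says that below any positive pair (T0, T1) such a
    relation is decided on some positive pair (S0, S1): otherwise D0-most s0
    split every positive subset of T1 into two positive halves, and picking
    such s0 one after the other builds arbitrarily long shattered sequences.
    There are finitely many formula instances, so iterating the key lemma
    ([decided_family]) decides all of them at once, and the common values of
    these instances form the type q. *)

Set Implicit Arguments.

Section FilterFacts.
Variables (I : Type) (D : (I -> Prop) -> Prop).
Hypothesis HD : proper_filter D.

Definition eventually (S P : I -> Prop) : Prop :=
  exists X, D X /\ forall i, X i -> S i -> P i.

Lemma positive_mono {S T : I -> Prop} :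
  positive D S -> (forall i, S i -> T i) -> positive D T.
Proof.
  intros PS HST X HX. destruct (PS X HX) as [i [Xi Si]]. exists i; auto.
Qed.

Lemma positive_full : positive D (fun _ => True).
Proof.
  destruct HD as (_ & Dmono & _ & Dproper). intros X HX.
  apply NNPP; intro Hno. apply Dproper, (Dmono X); auto.
  intros i Xi. apply Hno. exists i; auto.
Qed.

Lemma positive_eventually (S P : I -> Prop) :
  positive D S -> eventually S P -> exists i, S i /\ P i.
Proof.
  intros PS [X [HX HXP]]. destruct (PS X HX) as [i [Xi Si]]. exists i; auto.
Qed.

Lemma not_positive_eventually {S P : I -> Prop} :
  ~ positive D (fun i => S i /\ P i) -> eventually S (fun i => ~ P i).
Proof.
  intros NP. apply NNPP; intro NE. apply NP. intros X HX.
  apply NNPP; intro Hno. apply NE. exists X. split; auto.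
  intros i Xi Si Pi. apply Hno. exists i; auto.
Qed.

Lemma eventually_of {S P : I -> Prop} : (forall i, S i -> P i) -> eventually S P.
Proof. intros HSP. exists (fun _ => True). destruct HD as (DT & _). auto. Qed.

Lemma eventually_weaken {S S' P P' : I -> Prop} :
  eventually S P -> (forall i, S' i -> S i) -> (forall i, S' i -> P i -> P' i) ->
  eventually S' P'.
Proof. intros [X [HX HXP]] HS HP. exists X. split; auto. Qed.

Lemma eventually_and (S P Q : I -> Prop) :
  eventually S P -> eventually S Q -> eventually S (fun i => P i /\ Q i).
Proof.
  destruct HD as (_ & _ & Dcap & _).
  intros [X [HX HXP]] [Y [HY HYQ]]. exists (fun i => X i /\ Y i).
  split; [apply Dcap; auto|]. intros i [Xi Yi] Si; auto.
Qed.

Lemma eventually_all (A : Type) (l : list A) (S : I -> Prop) (Q : A -> I -> Prop) :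
  (forall a, In a l -> eventually S (Q a)) ->
  eventually S (fun i => forall a, In a l -> Q a i).
Proof.
  induction l as [|a l IH]; intros H.
  - apply eventually_of. intros i _ b [].
  - apply (eventually_weaken
             (eventually_and (H a (or_introl eq_refl)) (IH (fun b Hb => H b (or_intror Hb))))).
    + auto.
    + intros i _ [Ha Hl] b [<-|Hb]; auto.
Qed.

Lemma eventually_forall_filter (S P : I -> Prop) :
  eventually S P -> forall_filter D S P.
Proof.
  intros [X [HX HXP]]. exists [X; S]. split.
  - intros Y [<-|[<-|[]]]; [left; exact HX | right; intro; reflexivity].
  - intros i Hi. assert (Si : S i) by (apply Hi; simpl; auto).
    split; auto. apply HXP; auto. apply Hi; simpl; auto.
Qed.

End FilterFacts.

Definition nip_rel (I0 I1 : Type) (R : I0 -> I1 -> Prop) : Prop :=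
  exists n, ~ exists s : nat -> I0, forall J : nat -> bool,
    exists s1, forall i, i < n -> (R (s i) s1 <-> J i = true).

Lemma nip_rel_ext (I0 I1 : Type) (R R' : I0 -> I1 -> Prop) :
  (forall s0 s1, R s0 s1 <-> R' s0 s1) -> nip_rel R -> nip_rel R'.
Proof.
  intros HRR' [n Hn]. exists n. intros [s Hs]. apply Hn. exists s. intros J.
  destruct (Hs J) as [s1 Hs1]. exists s1. intros i Hi. rewrite HRR'. auto.
Qed.

Lemma nip_rel_iff_bool (I0 I1 : Type) (R : I0 -> I1 -> Prop) (t : bool) :
  nip_rel R -> nip_rel (fun s0 s1 => R s0 s1 <-> t = true).
Proof.
  intros [n Hn]. exists n. intros [s Hs]. apply Hn. exists s. intros J.
  destruct (Hs (fun i => Bool.eqb (J i) t)) as [s1 Hs1]. exists s1.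
  intros i Hi. specialize (Hs1 i Hi).
  assert (NF : false = true <-> False) by (split; [discriminate | tauto]).
  destruct t, (J i); simpl in *; rewrite ?NF in *; tauto.
Qed.

Lemma nip_rel_true (I0 I1 : Type) : nip_rel (fun (_ : I0) (_ : I1) => True).
Proof.
  exists 1. intros [s Hs]. destruct (Hs (fun _ => false)) as [s1 Hs1].
  destruct (Hs1 0) as [H _]; [lia|]. discriminate (H I).
Qed.

Fixpoint tuples (A : Type) (C : list A) (n : nat) : list (list A) :=
  match n with
  | 0 => [[]]
  | S n => flat_map (fun x => map (cons x) (tuples C n)) C
  end.

Lemma tuples_spec (A : Type) (C : list A) (n : nat) (c : list A) :
  In c (tuples C n) <-> length c = n /\ (forall x, In x c -> In x C).
Proof.
  revert c; induction n as [|n IH]; intros c; simpl.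
  - split.
    + intros [<-|[]]. split; [reflexivity | intros x []].
    + intros [Hl _]. destruct c; [left; reflexivity | discriminate].
  - rewrite in_flat_map. split.
    + intros [x [Cx Hc]]. apply in_map_iff in Hc as [c' [<- Hc']].
      apply IH in Hc' as [Hl Hin]. simpl. split; [congruence|].
      intros y [<-|Hy]; auto.
    + intros [Hl Hin]. destruct c as [|x c]; [discriminate|].
      exists x. split; [apply Hin; simpl; auto|]. apply in_map.
      apply IH. simpl in Hl. split; [congruence|]. intros y Hy. apply Hin; simpl; auto.
Qed.

Lemma bool_list_in_tuples (J : list bool) : In J (tuples [true; false] (length J)).
Proof.
  apply tuples_spec. split; [reflexivity|]. intros [|] _; simpl; auto.
Qed.

Section TwoFilters.
Variables (I0 I1 : Type) (D0 : (I0 -> Prop) -> Prop) (D1 : (I1 -> Prop) -> Prop).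
Hypotheses (HD0 : proper_filter D0) (HD1 : proper_filter D1).

Definition eventually2 (S0 : I0 -> Prop) (S1 : I1 -> Prop) (P : I0 -> I1 -> Prop) : Prop :=
  eventually D0 S0 (fun s0 => eventually D1 S1 (P s0)).

Lemma eventually2_of (S0 : I0 -> Prop) (S1 : I1 -> Prop) (P : I0 -> I1 -> Prop) :
  (forall s0 s1, S0 s0 -> S1 s1 -> P s0 s1) -> eventually2 S0 S1 P.
Proof.
  intros HP. apply (eventually_of HD0). intros s0 S0s0.
  apply (eventually_of HD1). auto.
Qed.

Lemma eventually2_weaken {S0 S0' : I0 -> Prop} {S1 S1' : I1 -> Prop} {P P' : I0 -> I1 -> Prop} :
  eventually2 S0 S1 P -> (forall s0, S0' s0 -> S0 s0) -> (forall s1, S1' s1 -> S1 s1) ->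
  (forall s0 s1, S0' s0 -> S1' s1 -> P s0 s1 -> P' s0 s1) -> eventually2 S0' S1' P'.
Proof.
  intros HP H0 H1 HPP'. apply (eventually_weaken HP H0).
  intros s0 S0s0 Hs0. apply (eventually_weaken Hs0 H1). auto.
Qed.

Lemma eventually2_and (S0 : I0 -> Prop) (S1 : I1 -> Prop) (P Q : I0 -> I1 -> Prop) :
  eventually2 S0 S1 P -> eventually2 S0 S1 Q ->
  eventually2 S0 S1 (fun s0 s1 => P s0 s1 /\ Q s0 s1).
Proof.
  intros HP HQ. apply (eventually_weaken (eventually_and HD0 HP HQ)); auto.
  intros s0 _ [Ps0 Qs0]. exact (eventually_and HD1 Ps0 Qs0).
Qed.

Lemma eventually2_forall_filter (S0 : I0 -> Prop) (S1 : I1 -> Prop) (P : I0 -> I1 -> Prop) :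
  eventually2 S0 S1 P ->
  forall_filter D0 S0 (fun s0 => forall_filter D1 S1 (P s0)).
Proof.
  intros HP. apply eventually_forall_filter.
  apply (eventually_weaken HP); auto.
  intros s0 _. apply eventually_forall_filter.
Qed.

Section Decision.
Variable R : I0 -> I1 -> Prop.

Definition decided (b : Prop) (S0 : I0 -> Prop) (S1 : I1 -> Prop) : Prop :=
  eventually2 S0 S1 (fun s0 s1 => R s0 s1 <-> b).

Definition splits (S1 : I1 -> Prop) (s0 : I0) : Prop :=
  positive D1 (fun s1 => S1 s1 /\ R s0 s1) /\ positive D1 (fun s1 => S1 s1 /\ ~ R s0 s1).

Lemma decide_or_split (T0 : I0 -> Prop) (S1 : I1 -> Prop) :
  (exists S0 b, (forall s0, S0 s0 -> T0 s0) /\ positive D0 S0 /\ decided b S0 S1) \/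
  eventually D0 T0 (splits S1).
Proof.
  set (decides_at b s0 := eventually D1 S1 (fun s1 => R s0 s1 <-> b)).
  assert (Hb : forall b, (exists S0, (forall s0, S0 s0 -> T0 s0) /\ positive D0 S0 /\
                                    decided b S0 S1) \/
                         eventually D0 T0 (fun s0 => ~ decides_at b s0)).
  { intros b. destruct (classic (positive D0 (fun s0 => T0 s0 /\ decides_at b s0)))
      as [Pos|NPos].
    - left. exists (fun s0 => T0 s0 /\ decides_at b s0). split; [tauto|]. split; auto.
      apply (eventually_of HD0). tauto.
    - right. exact (not_positive_eventually NPos). }
  destruct (Hb True) as [[S0 HS0]|NTrue]; [left; exists S0, True; exact HS0|].
  destruct (Hb False) as [[S0 HS0]|NFalse]; [left; exists S0, False; exact HS0|].
  (* Deciding neither True nor False means both halves are positive. *)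
  right. apply (eventually_weaken (eventually_and HD0 NTrue NFalse)); auto.
  intros s0 _ [NT NF]. split.
  - apply NNPP; intro NP. apply NF.
    apply (eventually_weaken (not_positive_eventually NP)); auto. tauto.
  - apply NNPP; intro NP. apply NT.
    apply (eventually_weaken (not_positive_eventually NP)); auto.
    intros s1 _ HnR. split; auto. intros _. apply NNPP; exact HnR.
Qed.

Definition pattern (T1 : I1 -> Prop) (s : nat -> I0) (J : list bool) (s1 : I1) : Prop :=
  T1 s1 /\ forall i, i < length J -> (R (s i) s1 <-> nth i J false = true).

Definition scons (s0 : I0) (s : nat -> I0) (i : nat) : I0 :=
  match i with 0 => s0 | S i => s i end.

Lemma pattern_cons (T1 : I1 -> Prop) (s : nat -> I0) (J : list bool) (s0 : I0)
    (b : bool) (s1 : I1) :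
  pattern T1 s J s1 -> (R s0 s1 <-> b = true) -> pattern T1 (scons s0 s) (b :: J) s1.
Proof.
  intros [T1s1 HJ] Hb. split; auto.
  intros [|i] Hi; simpl; auto. apply HJ. simpl in Hi. lia.
Qed.

Lemma splitting_tree (T0 : I0 -> Prop) (T1 : I1 -> Prop) :
  positive D0 T0 -> positive D1 T1 ->
  (forall S1, (forall s1, S1 s1 -> T1 s1) -> positive D1 S1 -> eventually D0 T0 (splits S1)) ->
  forall n, exists s : nat -> I0, forall J, length J = n -> positive D1 (pattern T1 s J).
Proof.
  intros PT0 PT1 Hsplit n. induction n as [|n [s Hs]].
  - destruct (positive_eventually PT0 (eventually_of HD0 (fun _ _ => I))) as [i0 _].
    exists (fun _ => i0). intros [|b J] HJ; [|discriminate].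
    apply (positive_mono PT1). intros s1 T1s1. split; auto. intros i Hi. simpl in Hi. lia.
  - assert (Hall : eventually D0 T0
             (fun s0 => forall J, In J (tuples [true; false] n) -> splits (pattern T1 s J) s0)).
    { apply (eventually_all HD0). intros J HJ. apply Hsplit.
      - intros s1 [T1s1 _]. exact T1s1.
      - apply Hs. apply tuples_spec in HJ. apply HJ. }
    destruct (positive_eventually PT0 Hall) as [s0 [_ Hs0]].
    exists (scons s0 s). intros [|b J] HJ; [discriminate|]. injection HJ as HJ.
    destruct (Hs0 J ltac:(rewrite <- HJ; apply bool_list_in_tuples)) as [PR PnR].
    destruct b.
    + apply (positive_mono PR). intros s1 [Hp HR].
      apply pattern_cons; [exact Hp | split; auto].
    + apply (positive_mono PnR). intros s1 [Hp HnR].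
      apply pattern_cons; [exact Hp | split; [contradiction | discriminate]].
Qed.

Lemma nip_rel_no_splitting_tree (T1 : I1 -> Prop) :
  nip_rel R ->
  ~ forall n, exists s : nat -> I0, forall J, length J = n -> positive D1 (pattern T1 s J).
Proof.
  intros [n Hn] Htree. apply Hn. destruct (Htree n) as [s Hs]. exists s. intros J.
  set (Jn := map J (seq 0 n)).
  assert (HJn : length Jn = n) by (unfold Jn; rewrite length_map, length_seq; reflexivity).
  destruct (Hs Jn HJn (fun _ => True) (proj1 HD1)) as [s1 [_ [_ Hpat]]].
  exists s1. intros i Hi. rewrite HJn in Hpat. rewrite (Hpat i Hi).
  unfold Jn. rewrite (nth_indep _ false (J 0)), map_nth, seq_nth by (rewrite ?length_map, ?length_seq; lia).
  reflexivity.
Qed.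

Lemma nip_rel_decided (T0 : I0 -> Prop) (T1 : I1 -> Prop) :
  nip_rel R -> positive D0 T0 -> positive D1 T1 ->
  exists S0 S1 b, (forall s0, S0 s0 -> T0 s0) /\ (forall s1, S1 s1 -> T1 s1) /\
    positive D0 S0 /\ positive D1 S1 /\ decided b S0 S1.
Proof.
  intros HR PT0 PT1. apply NNPP; intro Hnot.
  apply (nip_rel_no_splitting_tree (T1 := T1) HR), (splitting_tree PT0 PT1).
  intros S1 HS1 PS1. destruct (decide_or_split T0 S1) as [(S0 & b & HS0 & PS0 & Hdec)|Hsp].
  - exfalso. apply Hnot. exists S0, S1, b. auto.
  - exact Hsp.
Qed.

End Decision.

Lemma decided_family (A : Type) (R : A -> I0 -> I1 -> Prop) (l : list A) :
  (forall x, In x l -> nip_rel (R x)) ->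
  forall (T0 : I0 -> Prop) (T1 : I1 -> Prop), positive D0 T0 -> positive D1 T1 ->
  exists S0 S1 (Q : A -> Prop),
    (forall s0, S0 s0 -> T0 s0) /\ (forall s1, S1 s1 -> T1 s1) /\
    positive D0 S0 /\ positive D1 S1 /\
    eventually2 S0 S1 (fun s0 s1 => forall x, In x l -> (R x s0 s1 <-> Q x)).
Proof.
  induction l as [|x l IH]; intros HR T0 T1 PT0 PT1.
  - exists T0, T1, (fun _ => True). repeat split; auto.
    apply eventually2_of. intros s0 s1 _ _ y [].
  - destruct (nip_rel_decided (HR x (or_introl eq_refl)) PT0 PT1)
      as (S0' & S1' & b & HS0' & HS1' & PS0' & PS1' & Hdec).
    destruct (IH (fun y Hy => HR y (or_intror Hy)) S0' S1' PS0' PS1')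
      as (S0 & S1 & Q & HS0 & HS1 & PS0 & PS1 & HQ).
    (* The new index x gets the value b, the others keep their value under Q. *)
    exists S0, S1, (fun y => (y = x -> b) /\ (y <> x -> Q y)).
    repeat split; auto.
    assert (Hdec' : decided (R x) b S0 S1) by (apply (eventually2_weaken Hdec); auto).
    apply (eventually2_weaken (eventually2_and Hdec' HQ)); auto.
    intros s0 s1 _ _ [Hx Hl] y Hy. destruct (classic (y = x)) as [->|Hne].
    + rewrite Hx. tauto.
    + destruct Hy as [Hy|Hy]; [congruence|]. rewrite (Hl y Hy). tauto.
Qed.
End TwoFilters.

Section FormulaInstances.
Context {L : signature} {M : structure L}.

Lemma eval_agree (t : term L) (e e' : nat -> M) :
  (forall x, occurs x t -> e x = e' x) -> eval M e t = eval M e' t.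
Proof.
  revert e e'. induction t as [x|f args IH]; simpl; intros e e' H.
  - apply H. reflexivity.
  - f_equal. extensionality i. apply IH. intros x Hx. apply H. exists i; auto.
Qed.

Lemma sat_agree (phi : formula L) (e e' : nat -> M) :
  (forall x, free x phi -> e x = e' x) -> (sat M e phi <-> sat M e' phi).
Proof.
  revert e e'.
  induction phi as [t u|r args|p IH|p IH1 q IH2|y p IH]; simpl; intros e e' H.
  - rewrite (eval_agree t e e'), (eval_agree u e e'); [reflexivity| |];
      intros; apply H; auto.
  - replace (fun i => eval M e (args i)) with (fun i => eval M e' (args i));
      [reflexivity|].
    extensionality i. symmetry. apply eval_agree. intros x Hx. apply H. exists i; auto.
  - rewrite (IH e e' H). reflexivity.
  - rewrite (IH1 e e'), (IH2 e e'); [reflexivity| |]; intros; apply H; auto.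
  - assert (Hupd : forall a x, free x p -> upd M e y a x = upd M e' y a x).
    { intros a x Hx. unfold upd. destruct (Nat.eqb x y) eqn:E; auto.
      apply H. split; auto. apply Nat.eqb_neq; auto. }
    split; intros [a Ha]; exists a; apply (IH _ _ (Hupd a)); auto.
Qed.

Lemma forall_sat_ov (phi : formula L) (l : list M) (T : Prop) (e0 : nat -> M) :
  (forall x, free x phi -> x < length l) ->
  ((forall e, sat M (ov M l e) phi <-> T) <-> (sat M (ov M l e0) phi <-> T)).
Proof.
  intros Hfree.
  assert (Hindep : forall e, sat M (ov M l e) phi <-> sat M (ov M l e0) phi).
  { intros e. apply sat_agree. intros x Hx. apply nth_indep. auto. }
  split; [auto|]. intros H e. rewrite Hindep. exact H.
Qed.

Lemma NIP_nip_rel (I0 I1 : Type) (phi : formula L) (m k : nat)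
    (a : I0 -> list M) (b : I1 -> list M) (e : nat -> M) :
  NIP M -> (forall s0, length (a s0) = m) -> (forall s1, length (b s1) = k) ->
  nip_rel (fun s0 s1 => sat M (ov M (a s0 ++ b s1) e) phi).
Proof.
  intros HNIP Ha Hb. destruct (HNIP phi m k e) as [n Hn]. exists n.
  intros [s Hs]. apply Hn. exists (fun i => a (s i)). split; [auto|].
  intros J. destruct (Hs J) as [s1 Hs1]. exists (b s1). auto.
Qed.

Definition instances (Delta : list (formula L * nat)) (C : list M) :
    list ((formula L * nat) * list M * bool) :=
  flat_map (fun phik => flat_map (fun c => [(phik, c, true); (phik, c, false)])
                                 (tuples C (snd phik))) Delta.

Lemma in_instances (Delta : list (formula L * nat)) (C : list M)
    (phik : formula L * nat) (c : list M) (t : bool) :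
  In (phik, c, t) (instances Delta C) <->
  In phik Delta /\ length c = snd phik /\ (forall x, In x c -> In x C).
Proof.
  unfold instances. rewrite in_flat_map. split.
  - intros [phik' [HD Hc]]. apply in_flat_map in Hc as [c' [Hc' Hin]].
    apply tuples_spec in Hc'.
    destruct Hin as [E|[E|[]]]; injection E as -> ->; tauto.
  - intros (HD & Hl & Hc). exists phik. split; auto.
    apply in_flat_map. exists c. split; [apply tuples_spec; auto|].
    destruct t; simpl; auto.
Qed.

Lemma tp_in_instances {Delta : list (formula L * nat)} {C l : list M}
    {p : (formula L * nat) * list M * bool} :
  tp M Delta C l p -> In p (instances Delta C).
Proof.
  destruct p as [[phik c] t]. intros (HD & Hl & Hc & _). apply in_instances. auto.
Qed.

Lemma tp_nip_rel {I0 I1 : Type} {m0 m1 : nat} {a0 : I0 -> list M} {a1 : I1 -> list M}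
    {C : list M} {Delta : list (formula L * nat)} {p : (formula L * nat) * list M * bool} :
  NIP M -> (forall s0, length (a0 s0) = m0) -> (forall s1, length (a1 s1) = m1) ->
  (forall phi k, In (phi, k) Delta -> forall x, free x phi -> x < m0 + m1 + k) ->
  In p (instances Delta C) ->
  nip_rel (fun s0 s1 => tp M Delta C (a0 s0 ++ a1 s1) p).
Proof.
  destruct p as [[[phi k] c] t]. intros HNIP Ha0 Ha1 HDelta Hp.
  apply in_instances in Hp as (HD & Hl & Hc). simpl in Hl.
  assert (Hfree : forall s0 s1 x, free x phi -> x < length ((a0 s0 ++ a1 s1) ++ c)).
  { intros s0 s1. rewrite !length_app, Ha0, Ha1, Hl. exact (HDelta phi k HD). }
  (* With an empty universe the instance holds vacuously for all pairs. *)
  destruct (classic (inhabited M)) as [[m]|Hempty].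
  - set (e0 := fun _ : nat => m).
    apply (nip_rel_ext (R := fun s0 s1 =>
             sat M (ov M (a0 s0 ++ (a1 s1 ++ c)) e0) phi <-> t = true)).
    + intros s0 s1. simpl. rewrite (forall_sat_ov phi _ (t = true) e0 (Hfree s0 s1)), app_assoc. tauto.
    + apply nip_rel_iff_bool, (NIP_nip_rel phi (m := m0) (k := m1 + k)); auto.
      intros s1. rewrite length_app, Ha1, Hl. reflexivity.
  - apply (nip_rel_ext (R := fun _ _ => True)); [|apply nip_rel_true].
    intros s0 s1. simpl. split; [|tauto]. intros _. do 3 (split; auto).
    intros e. exfalso. apply Hempty. constructor. exact (e 0).
Qed.

End FormulaInstances.

Unset Implicit Arguments.

Theorem claim8p1 (L : signature) (M : structure L) (HNIP : NIP M)
  (I0 I1 : Type) (D0 : (I0 -> Prop) -> Prop) (D1 : (I1 -> Prop) -> Prop)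
  (HD0 : proper_filter D0) (HD1 : proper_filter D1)
  (m0 m1 : nat) (a0 : I0 -> list (dom M)) (a1 : I1 -> list (dom M))
  (Ha0 : forall t, length (a0 t) = m0) (Ha1 : forall t, length (a1 t) = m1)
  (C : list (dom M)) (Delta : list (formula L * nat))
  (HDelta : forall phi k, In (phi, k) Delta ->
              forall x, free x phi -> x < m0 + m1 + k) :
  exists (S0 : I0 -> Prop) (S1 : I1 -> Prop)
         (q : (formula L * nat) * list (dom M) * bool -> Prop),
    positive D0 S0 /\ positive D1 S1 /\
    forall_filter D0 S0 (fun s0 =>
      forall_filter D1 S1 (fun s1 =>
        forall p, q p <-> tp M Delta C (a0 s0 ++ a1 s1) p)).
Proof.
  destruct (decided_family HD0 HD1 (fun p s0 s1 => tp M Delta C (a0 s0 ++ a1 s1) p)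
              (instances Delta C)
              (fun p Hp => tp_nip_rel HNIP Ha0 Ha1 HDelta Hp)
              (positive_full HD0) (positive_full HD1))
    as (S0 & S1 & Q & _ & _ & PS0 & PS1 & HQ).
  (* The type q consists of the instances decided to hold. *)
  exists S0, S1, (fun p => In p (instances Delta C) /\ Q p).
  split; [exact PS0|]. split; [exact PS1|].
  apply eventually2_forall_filter.
  apply (eventually2_weaken HQ); auto.
  intros s0 s1 _ _ Hagree p. split.
  - intros [Hp Qp]. apply Hagree; auto.
  - intros Htp. assert (Hp := tp_in_instances Htp). split; [exact Hp|].
    apply Hagree; auto.
Qed.
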